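(* Let $q$ be a prime power, let $\pi$ be the plane $x_4=0$ and $T=\langle(0,0,0,1)\rangle$ in ${\rm PG}(3,q)$, and let $C$ be the group defined in the context. Then $C$ has $q+1$ orbits, each of size $q^3-1$, on the lines of ${\rm PG}(3,q)$ not contained in $\pi$ and not passing through $T$, and $C$ acts semiregularly on the $q^3-1$ points of ${\rm PG}(3,q)\setminus(\pi\cup\{T\})$.
   Context: Points of ${\rm PG}(3,q)$ are $\langle(x_1,x_2,x_3,x_4)\rangle$ (column vectors, matrices acting on the left). Let $\sigma\in{\rm GL}(3,q)$ be a Singer cycle (element of order $q^3-1$). $C$ is the group of projectivities of ${\rm PG}(3,q)$ induced by the matrices $\begin{pmatrix} A & 0\\ 0 & 1\end{pmatrix}$ with $A\in\langle\sigma\rangle$; it has order $q^3-1$, fixes $T$ and $\pi$, induces on $\pi$ a Singer cyclic group $C_1$ of ${\rm PGL}(3,q)$ (order $q^2+q+1$), and contains the $q-1$ homologies with centre $T$ and axis $\pi$. *)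

From HB Require Import structures.
From mathcomp Require Import all_boot all_order all_algebra all_fingroup all_field.
Set Implicit Arguments. Unset Strict Implicit. Unset Printing Implicit Defensive.
Import GRing.Theory.
Local Open Scope ring_scope.

(* Vectors of F^4 are row vectors
   'rV[F]_4; a projective subspace is represented by the canonical square
   matrix <<U>>%MS of the corresponding vector subspace (its row space). *)

Section PG3.
Variable F : finFieldType.

Definition PGpoints : {set 'M[F]_4} :=
  [set U : 'M[F]_4 | (\rank U == 1)%N && (<<U>>%MS == U)].

Definition PGlines : {set 'M[F]_4} :=
  [set U : 'M[F]_4 | (\rank U == 2)%N && (<<U>>%MS == U)].

Definition piPlane : 'M[F]_4 := pid_mx 3.

Definition Tvec : 'rV[F]_4 := delta_mx 0 ord_max.
Definition Tpoint : 'M[F]_4 := <<Tvec>>%MS.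

(* The projectivity induced by the matrix g acting on column vectors x |-> g x;
   on row vectors this is v |-> v g^T; it maps subspace U to <<U g^T>>. *)
Definition pact (g U : 'M[F]_4) : 'M[F]_4 := <<U *m g^T>>%MS.

Definition Cgroup (sigma : {'GL_3[F]}) : {set 'M[F]_4} :=
  [set (block_mx (GLval a) 0 0 1%:M : 'M[F]_(3 + 1)) | a : {'GL_3[F]} in <[sigma]>%g].

Definition Lset : {set 'M[F]_4} :=
  [set U in PGlines | ~~ (U <= piPlane)%MS & ~~ (Tvec <= U)%MS].

Definition Pset : {set 'M[F]_4} :=
  [set U in PGpoints | ~~ (U <= piPlane)%MS & U != Tpoint].

Definition Corbit (sigma : {'GL_3[F]}) (U : 'M[F]_4) : {set 'M[F]_4} :=
  [set pact g U | g in Cgroup sigma].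

End PG3.

From HB Require Import structures.
From mathcomp Require Import all_boot all_order all_algebra all_fingroup all_field.
From mathcomp Require Import zify.

(* The polynomials in a Singer cycle A of GL(3,q) form a subalgebra F[A] with at
   most q^3 elements containing the q^3 - 1 distinct powers of A, so its nonzero
   elements are exactly the powers of A, all invertible. Hence a power of A with
   an eigenvector is a scalar, and <A> acts regularly on the nonzero vectors.
   In the affine chart x_4 = 1, the points off pi other than T are the nonzero
   vectors v, the lines off pi missing T are spanned by (w,0) and (v,1) with
   w <> 0 and v not in <w>, and diag(M,1) maps (w,v) to (wM^T, vM^T). An element
   of C fixing such a line is a scalar mu by the eigenvector property, and
   (mu - 1) v in <w> forces mu = 1; so C is semiregular on points and lines.
   Transitivity moves w to e0 and a scalar normalises v to one of the q + 1
   points of the projective line of F^3 / <e0>, which lie in distinct orbits. *)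

Set Implicit Arguments. Unset Strict Implicit. Unset Printing Implicit Defensive.
Import GRing.Theory FinRing.Theory.
Local Open Scope ring_scope.

Lemma genmx_eq_sub_rank (F : fieldType) m n (V : 'M[F]_(m, n)) (U : 'M[F]_n) :
  <<U>>%MS = U -> (V <= U)%MS -> (\rank U <= \rank V)%N -> <<V>>%MS = U.
Proof.
move=> gU sVU rUV; rewrite -[RHS]gU; apply/genmxP.
by rewrite sVU -(mxrank_leqif_sup sVU).2 eqn_leq mxrankS.
Qed.

Lemma delta_mx_neq0 {R : nzRingType} {m n} (i : 'I_m) (j : 'I_n) :
  delta_mx i j != 0 :> 'M[R]_(m, n).
Proof. by apply/eqP => /matrixP/(_ i j); rewrite !mxE !eqxx; apply/eqP/oner_neq0. Qed.

Lemma row_free_trGL (F : finFieldType) n (a : {'GL_n[F]}) : row_free (GLval a)^T.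
Proof. by rewrite row_free_unit unitmx_tr GL_unitmx. Qed.

Section SingerCycle.
Variables (F : finFieldType) (n : nat) (s : {'GL_n.+1[F]}).
Local Notation q := #|F|.
Hypothesis singer_order : #[s]%g = (q ^ n.+1 - 1)%N.
Local Notation A := (GLval s).

Let d := degree_mxminpoly A.
Let P := [set horner_mx A (rVpoly u) | u : 'rV[F]_d].
Let X := [set GLval a | a in <[s]>%g].

Lemma singer_alg_horner p : horner_mx A p \in P.
Proof.
apply/imsetP; exists (poly_rV (p %% mxminpoly A)) => //.
by rewrite poly_rV_K ?size_mod_mxminpoly // -horner_mxK mx_inv_hornerK ?horner_mx_mem.
Qed.

Lemma cycle_GLval_horner a : a \in <[s]>%g -> exists p, GLval a = horner_mx A p.
Proof.
by case/cycleP => k ->; exists 'X^k; rewrite rmorphXn /= horner_mx_X val_unitX.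
Qed.

Lemma singer_alg_nz_cycle : P :\ 0 = X.
Proof.
have P0 : 0 \in P by rewrite -(rmorph0 (horner_mx A)) singer_alg_horner.
apply/esym/eqP; rewrite eqEcard; apply/andP; split.
  apply/subsetP => _ /imsetP[a Ca ->]; have [p Ep] := cycle_GLval_horner Ca.
  rewrite !inE Ep singer_alg_horner -Ep andbT.
  by apply: contraTneq (GL_unit a) => ->; rewrite unitr0.
have d_le : (d <= n.+1)%N.
  have := dvdp_leq (monic_neq0 (char_poly_monic A)) (mxminpoly_dvd_char A).
  by rewrite size_mxminpoly size_char_poly.
have cardP : #|P| = (q ^ d)%N.
  by rewrite card_imset ?card_mx ?mul1n //; exact: horner_rVpoly_inj.
have -> : #|P :\ 0| = (q ^ d - 1)%N by rewrite -cardP (cardsD1 0 P) P0 add1n subn1.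
rewrite card_in_imset; last by move=> a b _ _; apply: val_inj.
rewrite -orderE singer_order leq_sub2r // leq_pexp2l //.
exact: ltnW (card_finNzRing_gt1 F).
Qed.

Lemma singer_alg_row_inj p1 p2 (w : 'rV[F]_n.+1) : w != 0 ->
  w *m (horner_mx A p1)^T = w *m (horner_mx A p2)^T -> horner_mx A p1 = horner_mx A p2.
Proof.
move=> nzw E; apply/eqP; rewrite -subr_eq0 -rmorphB; apply: contraNT nzw => nz12.
have /imsetP[a _ Ea] : horner_mx A (p1 - p2) \in X.
  by rewrite -singer_alg_nz_cycle !inE nz12 singer_alg_horner.
by rewrite -(mulmx_free_eq0 w (row_free_trGL a)) -Ea rmorphB linearB mulmxBr E subrr.
Qed.

Lemma singer_eigenrow a mu (w : 'rV[F]_n.+1) :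
  a \in <[s]>%g -> w != 0 -> w *m (GLval a)^T = mu *: w -> GLval a = mu%:M.
Proof.
move=> Ca nzw aw; have [p Ep] := cycle_GLval_horner Ca.
rewrite Ep -(horner_mx_C A); apply: (singer_alg_row_inj nzw).
by rewrite -Ep horner_mx_C aw tr_scalar_mx mul_mx_scalar.
Qed.

Lemma singer_transitive_row (w z : 'rV[F]_n.+1) :
  w != 0 -> z != 0 -> exists2 a, a \in <[s]>%g & w *m (GLval a)^T = z.
Proof.
move=> nzw nzz; pose f (a : {'GL_n.+1[F]}) := w *m (GLval a)^T.
have inj_f : {in <[s]>%g &, injective f}.
  move=> a b Ca Cb fab; apply: val_inj.
  have [[pa Ea] [pb Eb]] := (cycle_GLval_horner Ca, cycle_GLval_horner Cb).
  by rewrite /= Ea Eb; apply: (singer_alg_row_inj nzw); rewrite -Ea -Eb.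
have sub_f : f @: <[s]>%g \subset [set~ 0].
  by apply/subsetP => _ /imsetP[a _ ->]; rewrite !inE (mulmx_free_eq0 _ (row_free_trGL a)).
have im_f : f @: <[s]>%g = [set~ 0].
  apply/eqP; rewrite eqEcard sub_f cardsC1 card_in_imset // -orderE singer_order.
  by rewrite /= card_mx mul1n subn1.
have /imsetP[a Ca ->] : z \in f @: <[s]>%g by rewrite im_f !inE.
by exists a.
Qed.

Lemma singer_scalar mu : mu != 0 -> exists2 a, a \in <[s]>%g & GLval a = mu%:M.
Proof.
move=> nzmu; have nze := delta_mx_neq0 (0 : 'I_1) (0 : 'I_n.+1) (R := F).
have [|a Ca ae] := singer_transitive_row nze (z := mu *: delta_mx 0 0).
  by rewrite scaler_eq0 negb_or nzmu.
by exists a; last exact: singer_eigenrow ae.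
Qed.

End SingerCycle.

Section ExtendedMatrix.
Variable R : pzRingType.

Definition ext_mx n (M : 'M[R]_n) : 'M[R]_(n + 1) := block_mx M 0 0 1%:M.

Lemma mul_row_ext_mx n (x : 'rV[R]_n) (t : 'rV[R]_1) M :
  row_mx x t *m ext_mx M = row_mx (x *m M) t.
Proof. by rewrite mul_row_block !mulmx0 addr0 add0r mulmx1. Qed.

Lemma ext_mxM n (M1 M2 : 'M[R]_n) : ext_mx M1 *m ext_mx M2 = ext_mx (M1 *m M2).
Proof. by rewrite mulmx_block !mulmx0 !mul0mx !addr0 !add0r mulmx1. Qed.

Lemma ext_mx1 n : ext_mx (1%:M : 'M[R]_n) = 1%:M.
Proof. by rewrite /ext_mx -scalar_mx_block. Qed.

Lemma tr_ext_mx n (M : 'M[R]_n) : (ext_mx M)^T = ext_mx M^T.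
Proof. by rewrite tr_block_mx !trmx0 tr_scalar_mx. Qed.

End ExtendedMatrix.

Section AffineChart.
Variable F : finFieldType.
Local Notation e0 := (delta_mx 0 0 : 'rV[F]_3).

Lemma pactM (g h U : 'M[F]_4) : pact g (pact h U) = pact (g *m h) U.
Proof.
by apply: eq_genmx; rewrite trmx_mul mulmxA; apply: eqmxMr; exact: genmxE.
Qed.

Lemma pact1 (U : 'M[F]_4) : pact 1%:M U = <<U>>%MS.
Proof. by rewrite /pact tr_scalar_mx mulmx1. Qed.

Definition affine_point (v : 'rV[F]_3) : 'M[F]_(3 + 1) := <<row_mx v 1%:M>>%MS.

Definition affine_line (w v : 'rV[F]_3) : 'M[F]_(3 + 1) :=
  <<(row_mx w 0 + row_mx v 1%:M)%MS>>%MS.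

Lemma sub_piPlane (x : 'rV[F]_(3 + 1)) : (x <= piPlane F)%MS = (rsubmx x == 0).
Proof.
rewrite /piPlane (@pid_mx_block _ 1 1 3) -{1}[x]hsubmxK; apply/idP/eqP => [/submxP[z]|->].
  rewrite -[z](@hsubmxK _ 1 3 1) (@mul_row_block _ 1 3 1 3 1) !mulmx0 !addr0 mulmx1.
  by case/eq_row_mx.
apply/submxP; exists (row_mx (lsubmx x) 0).
by rewrite (@mul_row_block _ 1 3 1 3 1) !mulmx0 !addr0 mulmx1.
Qed.

Lemma row_mx1_notin_piPlane (x : 'rV[F]_3) : ~~ (row_mx x 1%:M <= piPlane F)%MS.
Proof. by rewrite sub_piPlane row_mxKr -[1%:M]/(1 : 'M_1) oner_neq0. Qed.

Lemma row_mx1_neq0 (x : 'rV[F]_3) : row_mx x (1%:M : 'rV[F]_1) != 0.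
Proof. by apply: contraNneq (row_mx1_notin_piPlane x) => ->; rewrite sub0mx. Qed.

Lemma TvecE : Tvec F = row_mx 0 1%:M :> 'rV_(3 + 1).
Proof.
apply/rowP => j; rewrite !mxE; case: splitP => i ej; rewrite !mxE /=.
  by rewrite -val_eqE /= ej ltn_eqF.
by rewrite -val_eqE /= ej (ord1 i) eqxx.
Qed.

Lemma sub_affine_lineP (w v x : 'rV[F]_3) b :
  reflect (exists a, x = a *: w + b *: v) (row_mx x b%:M <= affine_line w v)%MS.
Proof.
rewrite genmxE; apply: (iffP sub_addsmxP) => [[[u1 u2] /=]|[a ->]].
  rewrite [u1]mx11_scalar [u2]mx11_scalar !mul_scalar_mx !scale_row_mx add_row_mx.
  case/eq_row_mx => -> /(congr1 (fun M : 'M_1 => M 0 0)).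
  by rewrite scaler0 add0r -scalemx1 !mxE !eqxx !mulr1n !mulr1 => ->; exists (u1 0 0).
exists (a%:M, b%:M) => /=.
by rewrite !mul_scalar_mx !scale_row_mx add_row_mx scaler0 add0r scalemx1.
Qed.

Lemma sub_affine_line_pi (w v x : 'rV[F]_3) :
  (row_mx x 0 <= affine_line w v)%MS = (x <= w)%MS.
Proof.
rewrite (_ : 0 = 0%:M); last by rewrite -scalemx1 scale0r.
by apply/sub_affine_lineP/sub_rVP => -[a ->]; exists a; rewrite scale0r addr0.
Qed.

Lemma rank_affine_line (w v : 'rV[F]_3) : w != 0 -> \rank (affine_line w v) = 2.
Proof.
move=> nzw; rewrite mxrank_gen.
set x := row_mx w 0; set y := row_mx v 1%:M.
have rx : \rank x = 1 by rewrite rank_rV row_mx_eq0 negb_and nzw.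
have ry : \rank y = 1 by rewrite rank_rV row_mx1_neq0.
apply/eqP; rewrite eqn_leq; apply/andP; split.
  by have := (mxrank_adds_leqif x y).1; rewrite rx ry.
suff /rank_ltmx : (x < x + y)%MS by rewrite rx.
have x_pi : (x <= piPlane F)%MS by rewrite sub_piPlane row_mxKr.
rewrite ltmxE addsmxSl addsmx_sub submx_refl /=.
by apply: contra (row_mx1_notin_piPlane v) => /submx_trans; apply.
Qed.

Lemma affine_normal (y : 'rV[F]_(3 + 1)) :
  ~~ (y <= piPlane F)%MS -> exists v, (row_mx v 1%:M <= y)%MS.
Proof.
rewrite sub_piPlane [rsubmx y]mx11_scalar => nz_ty; set t := rsubmx y 0 0 in nz_ty.
have nzt : t != 0 by apply: contraNneq nz_ty => ->; rewrite -scalemx1 scale0r.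
exists (t^-1 *: lsubmx y); apply/sub_rVP; exists t^-1.
by rewrite -{2}[y]hsubmxK scale_row_mx [rsubmx y]mx11_scalar scale_scalar_mx mulVf.
Qed.

Lemma affine_lineZD (w v : 'rV[F]_3) a b :
  w != 0 -> a != 0 -> affine_line (a *: w) (b *: w + v) = affine_line w v.
Proof.
move=> nzw nza; apply: genmx_eq_sub_rank; first exact: genmx_id.
  rewrite addsmx_sub sub_affine_line_pi scalemx_sub //=.
  by apply/sub_affine_lineP; exists b; rewrite scale1r.
have nzaw : a *: w != 0 by rewrite scaler_eq0 negb_or nza.
rewrite rank_affine_line //.
by move: (rank_affine_line (b *: w + v) nzaw); rewrite mxrank_gen => ->.
Qed.

Lemma affine_line_in_Lset (w v : 'rV[F]_3) :
  w != 0 -> ~~ (v <= w)%MS -> affine_line w v \in Lset F.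
Proof.
move=> nzw nvw; rewrite !inE rank_affine_line //=; apply/and3P; split.
- by rewrite /affine_line genmx_id.
- apply: contra (row_mx1_notin_piPlane v) => /(submx_trans _); apply.
  by rewrite genmxE addsmxSr.
rewrite TvecE; apply: contra nvw => /sub_affine_lineP[a].
rewrite scale1r addrC => /eqP; rewrite eq_sym addr_eq0 => /eqP ->.
by rewrite -scaleNr scalemx_sub.
Qed.

Lemma Lset_affine_line (U : 'M[F]_(3 + 1)) :
  U \in Lset F -> exists w v, [/\ w != 0, ~~ (v <= w)%MS & U = affine_line w v].
Proof.
rewrite !inE => /and3P[/andP[/eqP rU /eqP gU] nUpi nTU].
have /rowV0Pn[x] : (U :&: piPlane F)%MS != 0.
  rewrite -mxrank_eq0 -lt0n; have := mxrank_sum_cap U (piPlane F).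
  rewrite rU rank_pid_mx; have := rank_leq_col (U + piPlane F)%MS; lia.
rewrite sub_capmx sub_piPlane => /andP[xU /eqP x0] nzx.
set w := @lsubmx _ 1 3 1 x; have xE : x = row_mx w 0 by rewrite -x0 hsubmxK.
case/row_subPn: nUpi => i /affine_normal[v /(submx_trans)/(_ (row_sub i U)) yU].
have sLU : (affine_line w v <= U)%MS.
  by rewrite genmxE addsmx_sub yU andbT; move: xU; rewrite xE.
have nzw : w != 0 by move: nzx; rewrite xE row_mx_eq0 eqxx andbT.
exists w, v; split => //.
- apply: contra nTU => /sub_rVP[c vE]; rewrite TvecE (submx_trans _ sLU) //.
  by apply/sub_affine_lineP; exists (- c); rewrite vE scale1r scaleNr addNr.
apply/esym; apply: genmx_eq_sub_rank => //; first by rewrite -genmxE.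
by rewrite rU -mxrank_gen rank_affine_line.
Qed.

Lemma LsetP U :
  reflect (exists w v, [/\ w != 0, ~~ (v <= w)%MS & U = affine_line w v]) (U \in Lset F).
Proof.
apply: (iffP idP) => [|[w [v [nzw nvw ->]]]]; first exact: Lset_affine_line.
exact: affine_line_in_Lset.
Qed.

Lemma affine_point_inj : injective affine_point.
Proof.
move=> v v' e; have : (row_mx v 1%:M <= affine_point v')%MS by rewrite -e genmxE.
rewrite genmxE => /sub_rVP[a]; rewrite scale_row_mx => /eq_row_mx[-> /matrixP/(_ 0 0)].
by rewrite !mxE eqxx mulr1n mulr1 => <-; rewrite scale1r.
Qed.

Lemma TpointE : Tpoint F = affine_point 0.
Proof. by rewrite /Tpoint TvecE. Qed.

Lemma PsetP p : reflect (exists2 v, v != 0 & p = affine_point v) (p \in Pset F).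
Proof.
apply: (iffP idP) => [|[v nzv ->]]; last first.
  rewrite !inE TpointE (inj_eq affine_point_inj) nzv andbT.
  rewrite /affine_point genmx_id mxrank_gen rank_rV row_mx1_neq0 genmxE /=.
  by apply/andP; split; [exact: eqxx | exact: row_mx1_notin_piPlane].
rewrite !inE => /and3P[/andP[/eqP rp /eqP gp] npi nTp].
case/row_subPn: npi => i /affine_normal[v /(submx_trans)/(_ (row_sub i p)) yp].
have pE : p = affine_point v.
  by apply/esym; apply: genmx_eq_sub_rank; rewrite // rp rank_rV row_mx1_neq0.
by exists v => //; apply: contraNneq nTp => v0; rewrite pE v0 TpointE.
Qed.

Lemma card_Pset : #|Pset F| = (#|F| ^ 3 - 1)%N.
Proof.
have -> : Pset F = affine_point @: [set~ 0].
  apply/setP => p; apply/PsetP/imsetP => [[v nzv ->]|[v]].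
    by exists v; rewrite ?inE.
  by rewrite !inE => nzv ->; exists v.
by rewrite card_imset ?cardsC1 ?card_mx ?mul1n ?subn1 //; exact: affine_point_inj.
Qed.

Lemma pact_affine_line (M : 'M[F]_3) w v :
  pact (ext_mx M) (affine_line w v) = affine_line (w *m M^T) (v *m M^T).
Proof.
rewrite /pact (tr_ext_mx M); apply: eq_genmx.
apply: eqmx_trans (eqmxMr _ (genmxE _)) _; apply: eqmx_trans (addsmxMr _ _ _) _.
by rewrite !mul_row_ext_mx.
Qed.

Lemma pact_affine_point (M : 'M[F]_3) v :
  pact (ext_mx M) (affine_point v) = affine_point (v *m M^T).
Proof.
rewrite /pact (tr_ext_mx M); apply: eq_genmx.
by apply: eqmx_trans (eqmxMr _ (genmxE _)) _; rewrite (mul_row_ext_mx v).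
Qed.

Lemma Lset_pact (M : 'M[F]_3) U :
  M \in unitmx -> U \in Lset F -> pact (ext_mx M) U \in Lset F.
Proof.
move=> uM /LsetP[w [v [nzw nvw ->]]]; rewrite pact_affine_line.
have frM : row_free M^T by rewrite row_free_unit unitmx_tr.
by apply: affine_line_in_Lset; rewrite ?mulmx_free_eq0 ?submxMfree.
Qed.

Lemma Pset_pact (M : 'M[F]_3) p :
  M \in unitmx -> p \in Pset F -> pact (ext_mx M) p \in Pset F.
Proof.
move=> uM /PsetP[v nzv ->]; rewrite pact_affine_point.
have frM : row_free M^T by rewrite row_free_unit unitmx_tr.
by apply/PsetP; exists (v *m M^T); rewrite ?mulmx_free_eq0.
Qed.

Let i1 : 'I_3 := Ordinal (isT : 1 < 3)%N.
Let i2 : 'I_3 := Ordinal (isT : 2 < 3)%N.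

(* The q + 1 points of the projective line PG(F^3 / <e0>): <e1 + t e2> and <e2>. *)
Definition proj_rep (o : option F) : 'rV[F]_3 :=
  if o is Some t then delta_mx 0 i1 + t *: delta_mx 0 i2 else delta_mx 0 i2.

Lemma row3P (x y : 'rV[F]_3) :
  x 0 0 = y 0 0 -> x 0 i1 = y 0 i1 -> x 0 i2 = y 0 i2 -> x = y.
Proof.
move=> x0 x1 x2; apply/rowP => -[[|[|[|//]]] lti].
- by rewrite (_ : Ordinal lti = 0) //; apply: val_inj.
- by rewrite (_ : Ordinal lti = i1) //; apply: val_inj.
- by rewrite (_ : Ordinal lti = i2) //; apply: val_inj.
Qed.

Lemma proj_rep_notin_e0 o : ~~ (proj_rep o <= e0)%MS.
Proof.
apply/negP => /sub_rVP[c] E; pose i := if o is Some _ then i1 else i2.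
have := congr1 (fun x : 'rV_3 => x 0 i) E; rewrite {}/i.
by case: o {E} => [t|]; rewrite !mxE /= !mulr0 ?addr0 => /eqP; rewrite oner_eq0.
Qed.

Lemma proj_rep_normal (v : 'rV[F]_3) : ~~ (v <= e0)%MS ->
  exists o mu b, mu != 0 /\ mu *: v = b *: e0 + proj_rep o.
Proof.
move=> nv0; have [v1_0|nz1] := eqVneq (v 0 i1) 0.
  have nz2 : v 0 i2 != 0.
    apply: contraNneq nv0 => v2_0; apply/sub_rVP; exists (v 0 0).
    by apply: row3P; rewrite !mxE ?v1_0 ?v2_0 /= ?mulr1 ?mulr0.
  exists None, (v 0 i2)^-1, ((v 0 i2)^-1 * v 0 0); rewrite invr_eq0; split => //.
  by apply: row3P; rewrite !mxE /= ?v1_0 ?mulr1 ?mulr0 ?add0r ?addr0 ?mulVf.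
exists (Some (v 0 i2 / v 0 i1)), (v 0 i1)^-1, ((v 0 i1)^-1 * v 0 0).
rewrite invr_eq0; split => //.
by apply: row3P; rewrite !mxE /= ?mulr1 ?mulr0 ?add0r ?addr0 ?mulVf // mulrC.
Qed.

Lemma proj_rep_scale_inj o o' mu b :
  mu *: proj_rep o = b *: e0 + proj_rep o' -> o = o'.
Proof.
move=> E; have := congr1 (fun x : 'rV_3 => x 0 i1) E.
have := congr1 (fun x : 'rV_3 => x 0 i2) E.
case: o o' {E} => [t|] [t'|]; rewrite !mxE /= ?mulr1 ?mulr0 ?add0r ?addr0 //.
- by move=> <-; rewrite mulr1 => ->; rewrite mul1r.
- by rewrite mulr1 => + mu0; rewrite mu0 mul0r => /eqP; rewrite eq_sym oner_eq0.
- by move=> _ /eqP; rewrite eq_sym oner_eq0.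
Qed.

End AffineChart.

Section SingerOrbits.
Variables (F : finFieldType) (s : {'GL_3[F]}).
Hypothesis singer_order : #[s]%g = (#|F| ^ 3 - 1)%N.
Local Notation C := <[s]>%g.
Local Notation e0 := (delta_mx 0 0 : 'rV[F]_3).
Let e0_neq0 : e0 != 0 := delta_mx_neq0 0 0.
Local Notation extGL a := (ext_mx (GLval (a : {'GL_3[F]}))).

Lemma CorbitE U : Corbit s U = [set pact (extGL a) U | a in C].
Proof. by rewrite /Corbit /Cgroup -imset_comp. Qed.

Lemma pact_extGLM a b U : pact (extGL a) (pact (extGL b) U) = pact (extGL (a * b)%g) U.
Proof. by rewrite pactM (ext_mxM (GLval a) (GLval b)). Qed.

Lemma Lset_genmx U : U \in Lset F -> <<U>>%MS = U.
Proof. by rewrite !inE => /andP[/andP[_ /eqP]]. Qed.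

Lemma Corbit_pact a U : a \in C -> Corbit s (pact (extGL a) U) = Corbit s U.
Proof.
move=> Ca; rewrite !CorbitE -{2}(rcoset_id Ca) -rcosetE -imset_comp.
by apply: eq_imset => c; rewrite pact_extGLM.
Qed.

Lemma pact_affine_line_scalar a w v v' : a \in C -> w != 0 ->
  pact (extGL a) (affine_line w v) = affine_line w v' ->
  exists mu b, GLval a = mu%:M /\ mu *: v = b *: w + v'.
Proof.
move=> Ca nzw; rewrite pact_affine_line => E.
have /sub_rVP[mu wE] : (w *m (GLval a)^T <= w)%MS.
  by rewrite -(sub_affine_line_pi _ v') -E genmxE addsmxSl.
have aE := singer_eigenrow singer_order Ca nzw wE.
have /sub_affine_lineP[b vE] : (row_mx (v *m (GLval a)^T) 1%:M <= affine_line w v')%MS.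
  by rewrite -E genmxE addsmxSr.
by exists mu, b; rewrite -[v']scale1r -vE aE tr_scalar_mx mul_mx_scalar.
Qed.

Lemma Lset_stab1 a U : a \in C -> U \in Lset F -> pact (extGL a) U = U -> a = 1%g.
Proof.
move=> Ca /LsetP[w [v [nzw nvw ->]]] /(pact_affine_line_scalar Ca nzw)[mu [b [aE vE]]].
suff mu1 : mu = 1 by apply: val_inj; rewrite /= aE mu1.
apply: contraNeq nvw => mu_neq1; apply/sub_rVP; exists ((mu - 1)^-1 * b).
have vE' : (mu - 1) *: v = b *: w by rewrite scalerBl scale1r vE addrK.
by rewrite -scalerA -vE' scalerA mulVf ?scale1r ?subr_eq0.
Qed.

Lemma Pset_stab1 a p : a \in C -> p \in Pset F -> pact (extGL a) p = p -> a = 1%g.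
Proof.
move=> Ca /PsetP[v nzv ->]; rewrite pact_affine_point => /affine_point_inj vE.
by apply: val_inj; apply: (singer_eigenrow singer_order Ca nzv); rewrite vE scale1r.
Qed.

Lemma pact_extGL_inj a b U : a \in C -> b \in C -> U \in Lset F ->
  pact (extGL a) U = pact (extGL b) U -> a = b.
Proof.
move=> Ca Cb LU E; apply/eqP; rewrite eq_mulVg1; apply/eqP.
apply: (Lset_stab1 _ LU); first by rewrite groupM ?groupV.
by rewrite -pact_extGLM -E pact_extGLM mulVg ext_mx1 pact1 Lset_genmx.
Qed.

Lemma card_Corbit U : U \in Lset F -> #|Corbit s U| = (#|F| ^ 3 - 1)%N.
Proof.
move=> LU; rewrite CorbitE card_in_imset -?orderE ?singer_order // => a b Ca Cb.
exact: pact_extGL_inj.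
Qed.

Lemma Corbit_proj_rep U :
  U \in Lset F -> exists o, Corbit s U = Corbit s (affine_line e0 (proj_rep o)).
Proof.
case/LsetP => w [v [nzw nvw ->]].
have [a1 Ca1 wE] := singer_transitive_row singer_order nzw e0_neq0.
have nv1 : ~~ (v *m (GLval a1)^T <= e0)%MS by rewrite -wE submxMfree ?(row_free_trGL a1).
have [o [mu [b [nzmu vE]]]] := proj_rep_normal nv1.
have [a2 Ca2 a2E] := singer_scalar singer_order nzmu.
exists o; rewrite -(Corbit_pact _ Ca1) pact_affine_line wE -(Corbit_pact _ Ca2).
by rewrite pact_affine_line a2E tr_scalar_mx !mul_mx_scalar vE affine_lineZD ?e0_neq0.
Qed.

Lemma Corbit_proj_rep_inj o o' :
  Corbit s (affine_line e0 (proj_rep o)) = Corbit s (affine_line e0 (proj_rep o')) -> o = o'.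
Proof.
move=> E; have : affine_line e0 (proj_rep o') \in Corbit s (affine_line e0 (proj_rep o)).
  rewrite E CorbitE; apply/imsetP; exists 1%g => //.
  by rewrite ext_mx1 pact1; apply/esym/genmx_id.
rewrite CorbitE.
case/imsetP => a Ca /esym/(pact_affine_line_scalar Ca e0_neq0)[mu [b [_]]].
exact: proj_rep_scale_inj.
Qed.

Lemma card_Corbits : #|[set Corbit s U | U in Lset F]| = (#|F| + 1)%N.
Proof.
have -> : [set Corbit s U | U in Lset F] =
          [set Corbit s (affine_line e0 (proj_rep o)) | o : option F].
  apply/setP => O; apply/imsetP/imsetP => [[U /Corbit_proj_rep[o ->] ->]|[o _ ->]].
    by exists o.
  exists (affine_line e0 (proj_rep o)) => //.
  by rewrite affine_line_in_Lset ?e0_neq0 ?proj_rep_notin_e0.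
rewrite card_imset ?card_option ?addn1 // => o o'; exact: Corbit_proj_rep_inj.
Qed.

End SingerOrbits.

Local Close Scope ring_scope.

Theorem lemma3p4 (F : finFieldType) (sigma : {'GL_3[F]})
  (Hsinger : #[sigma]%g = (#|F| ^ 3 - 1)%N) :
  let C := Cgroup sigma in
  (* C acts on the set of lines not in pi and not through T *)
  (forall g U, g \in C -> U \in Lset F -> pact g U \in Lset F) /\
  (* it has q+1 orbits on them, each of size q^3-1 *)
  #|[set Corbit sigma U | U in Lset F]| = (#|F| + 1)%N /\
  (forall U, U \in Lset F -> #|Corbit sigma U| = (#|F| ^ 3 - 1)%N) /\
  (* there are q^3-1 points off pi and different from T *)
  #|Pset F| = (#|F| ^ 3 - 1)%N /\
  (forall g p, g \in C -> p \in Pset F -> pact g p \in Pset F) /\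
  (* C acts semiregularly on them: only the identity fixes such a point *)
  (forall g p, g \in C -> p \in Pset F -> pact g p = p -> g = (1%:M)%R).
Proof.
move=> C; split; [|split; [|split; [|split; [|split]]]].
- by move=> _ U /imsetP[a _ ->]; apply: Lset_pact; exact: (GL_unitmx a).
- exact: card_Corbits.
- exact: card_Corbit.
- exact: card_Pset.
- by move=> _ p /imsetP[a _ ->]; apply: Pset_pact; exact: (GL_unitmx a).
- by move=> _ p /imsetP[a Ca ->] Pp /(Pset_stab1 Hsinger Ca Pp) ->; exact: (@ext_mx1 F 3).
Qed.
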